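(* Let $\mathcal H$ be a graded connected Hopf algebra over a field $\Bbbk$ and $\varphi,\psi\colon\mathcal H\to\Bbbk$ characters. There is an isomorphism of graded Hopf algebras $S(\varphi,\psi)^*\cong\mathcal H^*/I(\varphi,\psi)$.
   Context: $\mathcal H=\bigoplus_{n\ge0}\mathcal H_n$ is graded connected with each $\mathcal H_n$ finite-dimensional; $\mathcal H^*=\bigoplus_n(\mathcal H_n)^*$ is its graded dual Hopf algebra, and $S(\varphi,\psi)^*$ the graded dual of $S(\varphi,\psi)$. For a linear functional $\varphi$, $\varphi_n=\varphi|_{\mathcal H_n}$. $S(\varphi,\psi)$ is the largest graded subcoalgebra of $\mathcal H$ on which $\varphi=\psi$, and $I(\varphi,\psi)$ is the ideal of $\mathcal H^*$ generated by $\varphi_n-\psi_n$, $n\ge0$. (Both are known to be, respectively, a graded Hopf subalgebra and a graded Hopf ideal.) *)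

(* Graded connected Hopf algebras of finite type over a
   field K, presented by structure constants with respect to a homogeneous
   basis: H_n has basis b_{n,i}, i : 'I_(hdim n); an element of H_n is the
   row vector of its coordinates, 'rV[K]_(hdim n).  The graded dual H^* has
   the dual basis, so (H^* )_n is also 'rV[K]_(hdim n) (a row a encodes the
   functional b_{n,i} |-> a_i). *)
From HB Require Import structures.
From mathcomp Require Import all_boot all_order all_algebra.
Set Implicit Arguments.
Unset Strict Implicit.
Unset Printing Implicit Defensive.
Import GRing.Theory.
Local Open Scope ring_scope.

Record gHopfData (K : fieldType) := GHopfData {
  hdim : nat -> nat;
  (* smc p q n i j k = coefficient of b_{n,k} in b_{p,i} * b_{q,j} *)
  smc : forall p q n, 'I_(hdim p) -> 'I_(hdim q) -> 'I_(hdim n) -> K;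
  (* sdc p q n i j k = coefficient of b_{p,i} (x) b_{q,j} in Delta b_{n,k} *)
  sdc : forall p q n, 'I_(hdim p) -> 'I_(hdim q) -> 'I_(hdim n) -> K;
  (* ssc n i j = coefficient of b_{n,j} in S(b_{n,i})  (S is graded) *)
  ssc : forall n, 'I_(hdim n) -> 'I_(hdim n) -> K
}.
Arguments hdim {K} g n.
Arguments smc {K} g p q n.
Arguments sdc {K} g p q n.
Arguments ssc {K} g n.

Section GHopf.
Unset Implicit Arguments.
Context {K : fieldType} {H : gHopfData K}.
Local Notation d := (hdim H).
Local Notation mc := (smc H).
Local Notation dc := (sdc H).
Local Notation sc := (ssc H).

(* The unit is 1 = b_{0,i0} (H_0 = K 1, hdim 0 = 1); the counit is
   eps(b_{n,i}) = (n == 0). *)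
Definition is_gcHopf : Prop :=
  d 0 = 1%N /\
      (forall p q n i j k, n != (p + q)%N -> mc p q n i j k = 0) /\
      (forall p q n i j k, n != (p + q)%N -> dc p q n i j k = 0) /\
      (forall p q r n i j k t,
          \sum_(l : 'I_(d (p + q))) mc p q (p + q) i j l * mc (p + q) r n l k t
        = \sum_(l : 'I_(d (q + r))) mc q r (q + r) j k l * mc p (q + r) n i l t) /\
      (forall q n (i0 : 'I_(d 0)) j k,
          mc 0 q n i0 j k = ((n == q) && (val j == val k))%:R) /\
      (forall p n (i0 : 'I_(d 0)) i k,
          mc p 0 n i i0 k = ((n == p) && (val i == val k))%:R) /\
      (forall p q r n i j k t,
          \sum_(l : 'I_(d (p + q))) dc (p + q) r n l k t * dc p q (p + q) i j l
        = \sum_(l : 'I_(d (q + r))) dc p (q + r) n i l t * dc q r (q + r) j k l) /\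
      (forall q n (i0 : 'I_(d 0)) j k,
          dc 0 q n i0 j k = ((n == q) && (val j == val k))%:R) /\
      (forall p n (i0 : 'I_(d 0)) i k,
          dc p 0 n i i0 k = ((n == p) && (val i == val k))%:R) /\
      (* Delta is multiplicative: Delta(b_{p,i} b_{q,j}) = Delta(b_{p,i}) Delta(b_{q,j}),
         compared on the coefficient of b_{a,s} (x) b_{b,t}; and Delta(1) = 1 (x) 1 *)
      (forall p q a b i j s t,
          \sum_(k : 'I_(d (p + q))) mc p q (p + q) i j k * dc a b (p + q) s t k
        = \sum_(p1 < p.+1) \sum_(q1 < q.+1)
            \sum_(i1 : 'I_(d p1)) \sum_(i2 : 'I_(d (p - p1)))
            \sum_(j1 : 'I_(d q1)) \sum_(j2 : 'I_(d (q - q1)))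
              dc p1 (p - p1) p i1 i2 i * dc q1 (q - q1) q j1 j2 j
              * mc p1 q1 a i1 j1 s * mc (p - p1) (q - q1) b i2 j2 t) /\
      (forall s t k : 'I_(d 0), dc 0 0 0 s t k = 1) /\
      (* antipode: m (S (x) id) Delta = eta eps = m (id (x) S) Delta *)
      (forall n t k,
          \sum_(p < n.+1) \sum_(i : 'I_(d p)) \sum_(j : 'I_(d (n - p)))
             \sum_(i' : 'I_(d p))
               dc p (n - p) n i j t * sc p i i' * mc p (n - p) n i' j k
        = (n == 0%N)%:R) /\
      (forall n t k,
          \sum_(p < n.+1) \sum_(i : 'I_(d p)) \sum_(j : 'I_(d (n - p)))
             \sum_(j' : 'I_(d (n - p)))
               dc p (n - p) n i j t * sc (n - p) j j' * mc p (n - p) n i j' k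
        = (n == 0%N)%:R).

Definition lfun := forall n, 'I_(d n) -> K.

Definition lval (phi : lfun) n (x : 'rV[K]_(d n)) : K :=
  \sum_(i : 'I_(d n)) x 0 i * phi n i.

Definition lcomp (phi : lfun) n : 'rV[K]_(d n) := \row_i phi n i.

Definition is_character (phi : lfun) : Prop :=
  (forall (i0 : 'I_(d 0)), phi 0%N i0 = 1) /\
  (forall p q i j,
     \sum_(k : 'I_(d (p + q))) mc p q (p + q) i j k * phi (p + q)%N k
     = phi p i * phi q j).

(* Product of homogeneous elements of H (landing in degree n; zero unless n = p + q). *)
Definition hmul p q n (x : 'rV[K]_(d p)) (y : 'rV[K]_(d q)) : 'rV[K]_(d n) :=
  \row_k \sum_i \sum_j x 0 i * y 0 j * mc p q n i j k.

(* The (p,q)-component of Delta x for x in H_n, as an element of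
   H_p (x) H_q = 'M_(d p, d q). *)
Definition comulm p q n (x : 'rV[K]_(d n)) : 'M[K]_(d p, d q) :=
  \matrix_(i, j) \sum_k x 0 k * dc p q n i j k.

(* Product in the graded dual H^* (dual to Delta), of homogeneous elements. *)
Definition dmul p q n (f : 'rV[K]_(d p)) (g : 'rV[K]_(d q)) : 'rV[K]_(d n) :=
  \row_k \sum_i \sum_j dc p q n i j k * f 0 i * g 0 j.

(* The (p,q)-component of the coproduct of a in (H^* )_n (dual to the
   product of H), as an element of H^*_p (x) H^*_q: entry (i,j) = a(b_{p,i} b_{q,j}). *)
Definition dcomulm p q n (a : 'rV[K]_(d n)) : 'M[K]_(d p, d q) :=
  \matrix_(i, j) \sum_k mc p q n i j k * a 0 k.

(* U (x) V inside 'M_(m, n) = K^m (x) K^n. *)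
Definition in_tensor m n (U : {vspace 'rV[K]_m}) (V : {vspace 'rV[K]_n})
    (M : 'M[K]_(m, n)) : Prop :=
  exists s : seq ('rV[K]_m * 'rV[K]_n),
    (forall uv, uv \in s -> uv.1 \in U /\ uv.2 \in V) /\
    M = \sum_(uv <- s) (uv.1^T *m uv.2).

Definition gsubspace := forall n, {vspace 'rV[K]_(d n)}.

Definition is_gsubcoalg (T : gsubspace) : Prop :=
  forall n x, x \in T n -> forall p, (p <= n)%N ->
    in_tensor (d p) (d (n - p)) (T p) (T (n - p)%N) (comulm p (n - p) n x).

Definition agree_on (phi psi : lfun) (T : gsubspace) : Prop :=
  forall n x, x \in T n -> lval phi n x = lval psi n x.

Definition is_S (phi psi : lfun) (S : gsubspace) : Prop :=
  [/\ is_gsubcoalg S, agree_on phi psi S &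
      forall T, is_gsubcoalg T -> agree_on phi psi T ->
        forall n, (T n <= S n)%VS].

Definition drow n (i : 'I_(d n)) : 'rV[K]_(d n) := delta_mx 0 i.

(* Degree-n component of I(phi,psi), the two-sided ideal of H^* generated by
   the phi_m - psi_m: spanned by the a (phi_m - psi_m) b with a, b homogeneous
   (basis) elements of H^* of degrees p, n - m - p. *)
Definition Icomp (phi psi : lfun) n : {vspace 'rV[K]_(d n)} :=
  (\sum_(m < n.+1) \sum_(p < (n - m).+1)
     \sum_(i : 'I_(d p)) \sum_(j : 'I_(d (n - m - p)))
       <[ dmul (p + m) (n - m - p) n
            (dmul p m (p + m) (drow p i) (lcomp phi m - lcomp psi m))
            (drow (n - m - p) j) ]>)%VS.

Definition sdual (S : gsubspace) n := 'Hom(subvs_of (S n), K^o).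

Definition sev (S : gsubspace) n (f : sdual S n) (x : 'rV[K]_(d n)) : K :=
  f (vsproj (S n) x).

(* F : H^* -> S^* is a degree-preserving (linear) morphism of graded
   Hopf algebras (bialgebra morphism), which is surjective with kernel I:
   equivalently, F induces an isomorphism of graded Hopf algebras
   H^*/I ~ S^*. *)
Definition iso_data (S : gsubspace) (I : forall n, {vspace 'rV[K]_(d n)})
    (F : forall n, {linear 'rV[K]_(d n) -> sdual S n}) : Prop :=
  [/\
      (forall n (g : sdual S n), exists a, F n a = g),
      (forall n a, F n a = 0 <-> a \in I n) &
     [/\
      (* multiplicative: F(ab) = F(a) F(b), product of S^* dual to Delta_S *)
      (forall p q a b x, x \in S (p + q)%N ->
         sev S (p + q)%N (F (p + q)%N (dmul p q (p + q) a b)) x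
         = \sum_i \sum_j comulm p q (p + q) x i j
             * sev S p (F p a) (drow p i) * sev S q (F q b) (drow q j)),
      (* unital: F(1_{H^*}) = 1_{S^*}, i.e. F(eps) = eps restricted to S *)
      (forall x, x \in S 0%N ->
         sev S 0%N (F 0%N (const_mx 1)) x = \sum_i x 0 i),
      (* comultiplicative: Delta_{S^*}(F a) = (F (x) F)(Delta_{H^*} a),
         coproduct of S^* dual to the product of S *)
      (forall p q a x y, x \in S p -> y \in S q ->
         sev S (p + q)%N (F (p + q)%N a) (hmul p q (p + q) x y)
         = \sum_i \sum_j dcomulm p q (p + q) a i j
             * sev S p (F p (drow p i)) x * sev S q (F q (drow q j)) y) &
      (* counital: eps_{S^*}(F a) = (F a)(1) = a(1) = eps_{H^*}(a) *)
      (forall a : 'rV[K]_(d 0),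
         sev S 0%N (F 0%N a) (const_mx 1) = \sum_i a 0 i) ] ].

End GHopf.
Arguments is_gcHopf {K} H.
Arguments lfun {K} H.
Arguments gsubspace {K} H.

(* The isomorphism is restriction of functionals, H^*_n -> S_n^*.  It is onto,
   and it is a morphism of graded bialgebras as soon as S = S(phi, psi) contains 1
   and is closed under products.  The heart of the matter is that S_n is exactly
   the annihilator of I_n.  On the one hand, each generator a (phi_m - psi_m) b of I
   vanishes on any graded subcoalgebra on which phi = psi, since the product of H^*
   is dual to the coproduct of H.  On the other hand, I is a two-sided ideal
   containing every phi_m - psi_m, so its annihilator is a graded subcoalgebra on
   which phi = psi, hence lies in S by maximality.  Thus the kernel of restriction
   is ann (ann I) = I.  Maximality also gives the remaining properties: I_0 = 0, so
   S_0 = H_0; and the span of the products S_p S_q is a graded subcoalgebra, because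
   Delta is multiplicative, on which the characters phi and psi agree. *)

From HB Require Import structures.
From mathcomp Require Import all_boot all_order all_algebra.
From mathcomp Require Import ring zify.
Set Implicit Arguments.
Unset Strict Implicit.
Unset Printing Implicit Defensive.
Import GRing.Theory.
Local Open Scope ring_scope.

Lemma mulr_sum2r (R : comNzRingType) (I J : finType) (a : R) (F : I -> J -> R) :
  a * (\sum_i \sum_j F i j) = \sum_i \sum_j a * F i j.
Proof. by rewrite mulr_sumr; apply: eq_bigr => i _; rewrite mulr_sumr. Qed.

Lemma mulr_sum2l (R : comNzRingType) (I J : finType) (a : R) (F : I -> J -> R) :
  (\sum_i \sum_j F i j) * a = \sum_i \sum_j F i j * a.
Proof. by rewrite mulr_suml; apply: eq_bigr => i _; rewrite mulr_suml. Qed.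

Lemma big_rot3 (R : nmodType) (I J L : finType) (F : I -> J -> L -> R) :
  \sum_i \sum_j \sum_l F i j l = \sum_j \sum_l \sum_i F i j l.
Proof. by rewrite exchange_big; apply: eq_bigr => j _; rewrite exchange_big. Qed.

Lemma big_swap22 (R : nmodType) (I J L M : finType) (F : I -> J -> L -> M -> R) :
  \sum_i \sum_j \sum_l \sum_m F i j l m = \sum_l \sum_m \sum_i \sum_j F i j l m.
Proof. by under eq_bigr do rewrite big_rot3; rewrite big_rot3. Qed.

Section VectorSpaces.
Variable K : fieldType.

Lemma sum_delta_mx m (i : 'I_m) (F : 'I_m -> K) :
  \sum_j (delta_mx 0 i : 'rV[K]_m) 0 j * F j = F i.
Proof.
rewrite (bigD1 i) //= mxE !eqxx mul1r big1 ?addr0 // => j /negPf nji.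
by rewrite mxE nji andbF mul0r.
Qed.

Lemma linear_sumZ (U V : lmodType K) (f : {linear U -> V}) (I : finType)
    (a : I -> K) (u : I -> U) :
  f (\sum_i a i *: u i) = \sum_i a i *: f (u i).
Proof. by rewrite linear_sum; apply: eq_bigr => i _; rewrite linearZ. Qed.

Lemma bilinear_sumZ (U U' V : lmodType K) (f : {bilinear U -> U' -> V})
    (I J : finType) (a : I -> K) (b : J -> K) (u : I -> U) (v : J -> U') :
  f (\sum_i a i *: u i) (\sum_j b j *: v j) = \sum_i \sum_j (a i * b j) *: f (u i) (v j).
Proof.
rewrite linear_sumlz; apply: eq_bigr => i _; rewrite linearZl_LR linear_sumr scaler_sumr.
by apply: eq_bigr => j _; rewrite linearZr_LR scalerA.
Qed.

Lemma memv_sum_sup (vT : vectType K) (I : finType) (Us : I -> {vspace vT}) i0 v :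
  v \in Us i0 -> v \in (\sum_i Us i)%VS.
Proof. by rewrite !memvE => /(sumv_sup i0 isT). Qed.

Definition blimg (aT bT rT : vectType K) (f : {bilinear aT -> bT -> rT})
    (U : {vspace aT}) (V : {vspace bT}) : {vspace rT} :=
  <<allpairs f (vbasis U) (vbasis V)>>%VS.

Lemma memv_blimg (aT bT rT : vectType K) (f : {bilinear aT -> bT -> rT})
    (U : {vspace aT}) (V : {vspace bT}) x y :
  x \in U -> y \in V -> f x y \in blimg f U V.
Proof.
move=> xU yV; rewrite (coord_vbasis xU) (coord_vbasis yV) bilinear_sumZ.
apply: rpred_sum => i _; apply: rpred_sum => j _; apply/rpredZ/memv_span.
by apply/allpairsP; exists ((vbasis U)`_i, (vbasis V)`_j); rewrite !mem_nth ?size_tuple.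
Qed.

Lemma blimg_sub (aT bT rT : vectType K) (f : {bilinear aT -> bT -> rT})
    (U : {vspace aT}) (V : {vspace bT}) (W : {vspace rT}) :
  (forall x y, x \in U -> y \in V -> f x y \in W) -> (blimg f U V <= W)%VS.
Proof.
move=> fUV; apply/span_subvP => _ /allpairsP [[x y] [xU yV ->]].
by apply: fUV; apply: vbasis_mem.
Qed.

End VectorSpaces.

Arguments memv_sum_sup {K vT I Us} i0 {v}.

Section RowDuality.
Variable K : fieldType.
Implicit Types m n : nat.

Definition ev m (a x : 'rV[K]_m) : K := \sum_i a 0 i * x 0 i.
Arguments ev : simpl never.

Lemma evC m (a x : 'rV[K]_m) : ev a x = ev x a.
Proof. by apply: eq_bigr => i _; rewrite mulrC. Qed.

Lemma ev_is_bilinear m : bilinear_for *%R *%R (@ev m).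
Proof.
have evPl k (a b x : 'rV[K]_m) : ev (k *: a + b) x = k * ev a x + ev b x.
  rewrite /ev mulr_sumr -big_split; apply: eq_bigr => i _.
  by rewrite !mxE mulrDl mulrA.
by split=> [x k a b | a k x y]; rewrite ?evPl // ![ev a _]evC evPl.
Qed.

HB.instance Definition _ m :=
  bilinear_isBilinear.Build K 'rV[K]_m 'rV[K]_m K *%R *%R (@ev m) (ev_is_bilinear m).

Lemma ev_delta m (x : 'rV[K]_m) i : ev (delta_mx 0 i) x = x 0 i.
Proof. exact: sum_delta_mx. Qed.

Lemma projv_delta_sum m (U : {vspace 'rV[K]_m}) c : c \in U ->
  c = \sum_k c 0 k *: projv U (delta_mx 0 k).
Proof.
move=> cU; rewrite -{1}(projv_id cU) {1}(row_sum_delta c) linear_sum.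
by apply: eq_bigr => k _; rewrite linearZ.
Qed.

Definition ann m (U : {vspace 'rV[K]_m}) : {vspace 'rV[K]_m} :=
  lker (linfun (mulmxr (lin1_mx (projv U))^T)).

Lemma mem_annP m (U : {vspace 'rV[K]_m}) x :
  reflect (forall c, c \in U -> ev c x = 0) (x \in ann U).
Proof.
rewrite memv_ker lfunE /=.
have annE k : (x *m (lin1_mx (projv U))^T) 0 k = ev (projv U (delta_mx 0 k)) x.
  by rewrite mxE evC; apply: eq_bigr => i _; rewrite !mxE.
apply: (iffP eqP) => [x0 c cU | xU].
  rewrite (projv_delta_sum cU) linear_sumlz big1 // => k _.
  by rewrite linearZl_LR /= -annE x0 mxE mulr0.
by apply/rowP => k; rewrite annE mxE xU // memv_proj.
Qed.

Lemma annS m (U V : {vspace 'rV[K]_m}) : (U <= V)%VS -> (ann V <= ann U)%VS.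
Proof.
move=> /subvP sUV; apply/subvP => x /mem_annP xV; apply/mem_annP => c /sUV.
exact: xV.
Qed.

Lemma ann0 m : ann (0 : {vspace 'rV[K]_m}) = fullv.
Proof.
apply/vspaceP => x; rewrite memvf; apply/mem_annP => c.
by rewrite memv0 => /eqP->; rewrite linear0l.
Qed.

(* If a is not in U, some coordinate k of a - projv U a is nonzero, and the k-th
   column of the complementary projection \1 - projv U is a vector of ann U
   that detects it. *)
Lemma annK m (U : {vspace 'rV[K]_m}) : ann (ann U) = U.
Proof.
apply/vspaceP => a; apply/idP/idP => [/mem_annP aU | aU]; last first.
  by apply/mem_annP => x /mem_annP xU; rewrite evC xU.
apply/negPn/negP => aNU.
pose f : 'End('rV[K]_m) := (\1 - projv U)%VF.
have fE c : f c = c - projv U c by rewrite /f add_lfunE opp_lfunE id_lfunE.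
have [k fak] : exists k, f a 0 k != 0.
  apply/existsP; apply: contraR aNU => /existsPn fa0.
  have /eqP : f a = 0 by apply/rowP => k; rewrite mxE; apply/eqP/negPn/fa0.
  by rewrite fE subr_eq0 => /eqP->; apply: memv_proj.
pose x := \row_i f (delta_mx 0 i) 0 k.
have evx c : ev c x = f c 0 k.
  rewrite [in RHS](row_sum_delta c) linear_sum summxE.
  by apply: eq_bigr => i _; rewrite linearZ !mxE mulrC.
have xU : x \in ann U by apply/mem_annP => c cU; rewrite evx fE projv_id ?subrr ?mxE.
by move: fak; rewrite -evx evC aU ?eqxx.
Qed.

Definition restr_fun m (U : {vspace 'rV[K]_m}) (a : 'rV[K]_m) (u : subvs_of U) : K^o :=
  ev a (vsval u).
Arguments restr_fun {m} U a u.

Lemma restr_fun_is_linear m (U : {vspace 'rV[K]_m}) a : linear (restr_fun U a).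
Proof. by move=> k u v; rewrite /restr_fun linearP linearPr. Qed.

HB.instance Definition _ m U a := GRing.isLinear.Build K (subvs_of U) K^o *:%R
  (@restr_fun m U a) (@restr_fun_is_linear m U a).

Definition restr m (U : {vspace 'rV[K]_m}) (a : 'rV[K]_m) : 'Hom(subvs_of U, K^o) :=
  linfun (restr_fun U a).
Arguments restr {m} U a.

Lemma restrE m (U : {vspace 'rV[K]_m}) a u : restr U a u = ev a (vsval u).
Proof. by rewrite lfunE. Qed.

Lemma restr_is_linear m (U : {vspace 'rV[K]_m}) : linear (restr U).
Proof.
move=> k a b; apply/lfunP => u.
by rewrite add_lfunE scale_lfunE !restrE linearPl.
Qed.

HB.instance Definition _ m U := GRing.isLinear.Build K 'rV[K]_m 'Hom(subvs_of U, K^o)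
  *:%R (@restr m U) (@restr_is_linear m U).

Lemma restr_vsproj m (U : {vspace 'rV[K]_m}) a x :
  restr U a (vsproj U x) = ev a (projv U x).
Proof. by rewrite restrE unlock. Qed.

Lemma restr_surj m (U : {vspace 'rV[K]_m}) (g : 'Hom(subvs_of U, K^o)) :
  exists a, restr U a = g.
Proof.
exists (\row_i g (vsproj U (delta_mx 0 i))); apply/lfunP => u.
rewrite restrE -{2}(vsvalK u) {2}(row_sum_delta (vsval u)) !linear_sum evC.
by apply: eq_bigr => i _; rewrite !linearZ /= mxE.
Qed.

Lemma restr_eq0 m (U : {vspace 'rV[K]_m}) a : restr U a = 0 <-> a \in ann U.
Proof.
split=> [a0 | /mem_annP aU].
  apply/mem_annP => c cU; move/lfunP/(_ (vsproj U c)): a0.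
  by rewrite zero_lfunE restrE vsprojK // evC.
by apply/lfunP => u; rewrite zero_lfunE restrE evC aU ?subvsP.
Qed.

Definition colr m n (M : 'M[K]_(m, n)) j : 'rV[K]_m := (col j M)^T.

Definition tensv m n (U : {vspace 'rV[K]_m}) (V : {vspace 'rV[K]_n}) :
    {vspace 'M[K]_(m, n)} :=
  ((\bigcap_j linfun (trmx \o col j) @^-1: U) :&: (\bigcap_i linfun (row i) @^-1: V))%VS.

Lemma mem_tensvP m n (U : {vspace 'rV[K]_m}) (V : {vspace 'rV[K]_n}) M :
  reflect ((forall j, colr M j \in U) /\ (forall i, row i M \in V)) (M \in tensv U V).
Proof.
rewrite memv_cap !memvE.
apply: (iffP andP) => [[/subv_bigcapP MU /subv_bigcapP MV] | [MU MV]].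
  split=> [j | i]; [move: (MU j isT) | move: (MV i isT)];
    by rewrite -memvE -memv_preim lfunE.
by split; apply/subv_bigcapP => i _; rewrite -memvE -memv_preim lfunE /= ?MU ?MV.
Qed.

Lemma in_tensorP m n (U : {vspace 'rV[K]_m}) (V : {vspace 'rV[K]_n}) M :
  in_tensor m n U V M <-> M \in tensv U V.
Proof.
split=> [[s [sUV ->]] | /mem_tensvP [MU MV]].
  rewrite big_seq; apply: rpred_sum => uv /sUV [uU vV]; apply/mem_tensvP.
  split=> [j | i].
    have -> : colr (uv.1^T *m uv.2) j = uv.2 0 j *: uv.1.
      by apply/rowP => i; rewrite !mxE big_ord1 !mxE mulrC.
    exact: rpredZ.
  have -> : row i (uv.1^T *m uv.2) = uv.1 0 i *: uv.2.
    by apply/rowP => j; rewrite !mxE big_ord1 !mxE.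
  exact: rpredZ.
exists [seq (projv U (delta_mx 0 i), row i M) | i <- enum 'I_m]; split.
  by move=> uv /mapP [i _ ->]; split; [apply: memv_proj | apply: MV].
rewrite big_map big_enum /=; apply/matrixP => i j; rewrite summxE.
have -> : M i j = projv U (colr M j) 0 i by rewrite projv_id // !mxE.
rewrite {1}(row_sum_delta (colr M j)) linear_sum summxE.
by apply: eq_bigr => k _; rewrite linearZ !mxE big_ord1 !mxE mulrC.
Qed.

Definition dualproj m (U : {vspace 'rV[K]_m}) (a : 'rV[K]_m) : 'rV[K]_m :=
  \row_i ev a (projv U (delta_mx 0 i)).

Lemma ev_dualproj m (U : {vspace 'rV[K]_m}) a x : ev (dualproj U a) x = ev a (projv U x).
Proof.
rewrite [in RHS](row_sum_delta x) linear_sumZ linear_sumr.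
by apply: eq_bigr => i _; rewrite linearZr_LR /= mxE mulrC.
Qed.

Lemma dualproj_ann m (U : {vspace 'rV[K]_m}) a : a - dualproj U a \in ann U.
Proof.
by apply/mem_annP => c cU; rewrite evC linearBl /= ev_dualproj projv_id ?subrr.
Qed.

End RowDuality.

Section GradedHopf.
Variables (K : fieldType) (H : gHopfData K).
Hypothesis HH : is_gcHopf H.
Local Notation d := (hdim H).
Local Notation mc := (smc H).
Local Notation dc := (sdc H).

Lemma hdim0 : d 0 = 1%N.
Proof. by case: HH. Qed.

Lemma smc_offdeg p q n i j k : n != (p + q)%N -> mc p q n i j k = 0.
Proof. by case: HH => _ [h _]; apply: h. Qed.

Lemma sdc_offdeg p q n i j k : n != (p + q)%N -> dc p q n i j k = 0.
Proof. by case: HH => _ [_ [h _]]; apply: h. Qed.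

Lemma sdc_coassoc p q r n i j k t :
  \sum_(l : 'I_(d (p + q))) dc (p + q) r n l k t * dc p q (p + q) i j l
  = \sum_(l : 'I_(d (q + r))) dc p (q + r) n i l t * dc q r (q + r) j k l.
Proof. by case: HH => _ [_ [_ [_ [_ [_ [h _]]]]]]; apply: h. Qed.

Lemma sdc_counitl q n (i0 : 'I_(d 0)) j k :
  dc 0 q n i0 j k = ((n == q) && (val j == val k))%:R.
Proof. by case: HH => _ [_ [_ [_ [_ [_ [_ [h _]]]]]]]; apply: h. Qed.

Lemma sdc_counitr p n (i0 : 'I_(d 0)) i k :
  dc p 0 n i i0 k = ((n == p) && (val i == val k))%:R.
Proof. by case: HH => _ [_ [_ [_ [_ [_ [_ [_ [h _]]]]]]]]; apply: h. Qed.

Lemma smc_sdc p q a b i j s t :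
  \sum_(k : 'I_(d (p + q))) mc p q (p + q) i j k * dc a b (p + q) s t k
  = \sum_(p1 < p.+1) \sum_(q1 < q.+1)
      \sum_(i1 : 'I_(d p1)) \sum_(i2 : 'I_(d (p - p1)))
      \sum_(j1 : 'I_(d q1)) \sum_(j2 : 'I_(d (q - q1)))
        dc p1 (p - p1) p i1 i2 i * dc q1 (q - q1) q j1 j2 j
        * mc p1 q1 a i1 j1 s * mc (p - p1) (q - q1) b i2 j2 t.
Proof. by case: HH => _ [_ [_ [_ [_ [_ [_ [_ [_ [h _]]]]]]]]]; apply: h. Qed.

Lemma dmul_is_bilinear p q n : bilinear_for *:%R *:%R (@dmul K H p q n).
Proof.
split=> [g k f f' | f k g g']; apply/rowP => t; rewrite /= !mxE;
  do 2!(rewrite mulr_sumr -big_split; apply: eq_bigr => ? _); rewrite !mxE /=; ring.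
Qed.

HB.instance Definition _ p q n := bilinear_isBilinear.Build K _ _ _ *:%R *:%R
  (@dmul K H p q n) (dmul_is_bilinear p q n).

(* The bilinear structure does not make [dmul p q n f] canonically linear. *)
HB.instance Definition _ p q n f := GRing.isLinear.Build K _ _ *:%R
  (@dmul K H p q n f) ((dmul_is_bilinear p q n).2 f).

Lemma hmul_is_bilinear p q n : bilinear_for *:%R *:%R (@hmul K H p q n).
Proof.
split=> [g k f f' | f k g g']; apply/rowP => t; rewrite /= !mxE;
  do 2!(rewrite mulr_sumr -big_split; apply: eq_bigr => ? _); rewrite !mxE /=; ring.
Qed.

HB.instance Definition _ p q n := bilinear_isBilinear.Build K _ _ _ *:%R *:%R
  (@hmul K H p q n) (hmul_is_bilinear p q n).

Lemma comulm_is_linear p q n : linear (@comulm K H p q n).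
Proof.
move=> k x y; apply/matrixP => i j; rewrite !mxE mulr_sumr -big_split.
by apply: eq_bigr => l _; rewrite !mxE /=; ring.
Qed.

HB.instance Definition _ p q n := GRing.isLinear.Build K _ _ *:%R
  (@comulm K H p q n) (@comulm_is_linear p q n).

Lemma dmul_offdeg p q n (f : 'rV[K]_(d p)) (g : 'rV[K]_(d q)) :
  n != (p + q)%N -> dmul p q n f g = 0.
Proof.
move=> nE; apply/rowP => k; rewrite !mxE big1 // => i _; rewrite big1 // => j _.
by rewrite sdc_offdeg // !mul0r.
Qed.

Lemma hmul_offdeg p q n (x : 'rV[K]_(d p)) (y : 'rV[K]_(d q)) :
  n != (p + q)%N -> hmul p q n x y = 0.
Proof.
move=> nE; apply/rowP => k; rewrite !mxE big1 // => i _; rewrite big1 // => j _.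
by rewrite smc_offdeg // !mulr0.
Qed.

Lemma dmulA a b c n (f : 'rV[K]_(d a)) (g : 'rV[K]_(d b)) (h : 'rV[K]_(d c)) :
  dmul (a + b) c n (dmul a b (a + b) f g) h = dmul a (b + c) n f (dmul b c (b + c) g h).
Proof.
apply/rowP => t; rewrite !mxE.
transitivity (\sum_i \sum_j \sum_k f 0 i * g 0 j * h 0 k *
    \sum_(l : 'I_(d (a + b))) dc (a + b) c n l k t * dc a b (a + b) i j l).
  under eq_bigr => l _ do under eq_bigr => k _ do rewrite mxE mulrAC mulr_sum2r.
  rewrite [LHS]big_rot3.
  under eq_bigr => k _ do under eq_bigr => i _ do rewrite exchange_big.
  rewrite [LHS]big_rot3; apply: eq_bigr => i _; apply: eq_bigr => j _.
  apply: eq_bigr => k _.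
  by rewrite mulr_sumr; apply: eq_bigr => l _; ring.
apply: eq_bigr => i _; under [RHS]eq_bigr => l _ do rewrite mxE mulr_sum2r.
rewrite [RHS]big_rot3; apply: eq_bigr => j _; apply: eq_bigr => k _.
by rewrite sdc_coassoc mulr_sumr; apply: eq_bigr => l _; ring.
Qed.

Lemma dmul1l n (i0 : 'I_(d 0)) (f : 'rV[K]_(d n)) : dmul 0 n n (drow 0 i0) f = f.
Proof.
apply/rowP => k; rewrite mxE (bigD1 i0) //= [X in _ + X]big1 ?addr0 => [|i /negPf ni].
  rewrite (bigD1 k) //= [X in _ + X]big1 ?addr0 => [|j /negPf nj].
    by rewrite sdc_counitl !eqxx mxE !eqxx mulr1 mul1r.
  by rewrite sdc_counitl eqxx /= (inj_eq val_inj) nj !mul0r.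
by apply: big1 => j _; rewrite mxE ni andbF mulr0 mul0r.
Qed.

Lemma dmul1r n (i0 : 'I_(d 0)) (f : 'rV[K]_(d n)) : dmul n 0 n f (drow 0 i0) = f.
Proof.
apply/rowP => k; rewrite mxE (bigD1 k) //= [X in _ + X]big1 ?addr0 => [|i /negPf ni].
  rewrite (bigD1 i0) //= [X in _ + X]big1 ?addr0 => [|j /negPf nj].
    by rewrite sdc_counitr !eqxx mxE !eqxx mulr1 mul1r.
  by rewrite mxE nj andbF mulr0.
by apply: big1 => j _; rewrite sdc_counitr eqxx /= (inj_eq val_inj) ni !mul0r.
Qed.

Lemma ev_dmul p q n (f : 'rV[K]_(d p)) (g : 'rV[K]_(d q)) x :
  ev (dmul p q n f g) x = \sum_i \sum_j comulm p q n x i j * f 0 i * g 0 j.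
Proof.
rewrite /ev; under eq_bigr => k _ do rewrite mxE mulr_sum2l; rewrite big_rot3.
apply: eq_bigr => i _; apply: eq_bigr => j _; rewrite !mxE !mulr_suml.
by apply: eq_bigr => k _; ring.
Qed.

Lemma ev_hmul p q n a (x : 'rV[K]_(d p)) (y : 'rV[K]_(d q)) :
  ev a (hmul p q n x y) = \sum_i \sum_j dcomulm p q n a i j * x 0 i * y 0 j.
Proof.
rewrite /ev; under eq_bigr => k _ do rewrite mxE mulr_sum2r; rewrite big_rot3.
apply: eq_bigr => i _; apply: eq_bigr => j _; rewrite !mxE !mulr_suml.
by apply: eq_bigr => k _; ring.
Qed.

Lemma ev_dmul_cols p q n (f : 'rV[K]_(d p)) (g : 'rV[K]_(d q)) x :
  ev (dmul p q n f g) x = \sum_j g 0 j * ev f (colr (comulm p q n x) j).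
Proof.
rewrite ev_dmul exchange_big; apply: eq_bigr => j _; rewrite /ev mulr_sumr.
by apply: eq_bigr => i _; rewrite !mxE; ring.
Qed.

Lemma ev_dmul_rows p q n (f : 'rV[K]_(d p)) (g : 'rV[K]_(d q)) x :
  ev (dmul p q n f g) x = \sum_i f 0 i * ev g (row i (comulm p q n x)).
Proof.
rewrite ev_dmul; apply: eq_bigr => i _; rewrite /ev mulr_sumr.
by apply: eq_bigr => j _; rewrite !mxE; ring.
Qed.

Lemma ev_dmul_annl p q n U V (f : 'rV[K]_(d p)) (g : 'rV[K]_(d q)) x :
  comulm p q n x \in tensv U V -> f \in ann U -> ev (dmul p q n f g) x = 0.
Proof.
move=> /mem_tensvP [xU _] /mem_annP fU; rewrite ev_dmul_cols big1 // => j _.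
by rewrite evC fU ?mulr0.
Qed.

Lemma ev_dmul_annr p q n U V (f : 'rV[K]_(d p)) (g : 'rV[K]_(d q)) x :
  comulm p q n x \in tensv U V -> g \in ann V -> ev (dmul p q n f g) x = 0.
Proof.
move=> /mem_tensvP [_ xV] /mem_annP gV; rewrite ev_dmul_rows big1 // => i _.
by rewrite evC gV ?mulr0.
Qed.

(* The product of H (x) H, a tensor in H_p (x) H_q being a d p x d q matrix. *)
Definition tmul p1 p2 q1 q2 a b (M : 'M[K]_(d p1, d p2)) (N : 'M[K]_(d q1, d q2)) :
    'M[K]_(d a, d b) :=
  \matrix_(s, t) \sum_i1 \sum_i2 \sum_j1 \sum_j2
     M i1 i2 * N j1 j2 * mc p1 q1 a i1 j1 s * mc p2 q2 b i2 j2 t.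
Arguments tmul {p1 p2 q1 q2} a b M N.

Lemma tmul_is_bilinear p1 p2 q1 q2 a b :
  bilinear_for *:%R *:%R (@tmul p1 p2 q1 q2 a b).
Proof.
split=> [N k M M' | M k N N']; apply/matrixP => s t; rewrite /= !mxE;
  do 4!(rewrite mulr_sumr -big_split; apply: eq_bigr => ? _); rewrite !mxE /=; ring.
Qed.

HB.instance Definition _ p1 p2 q1 q2 a b := bilinear_isBilinear.Build K _ _ _ *:%R *:%R
  (@tmul p1 p2 q1 q2 a b) (tmul_is_bilinear p1 p2 q1 q2 a b).

Lemma hmul_delta p q n i j :
  hmul p q n (delta_mx 0 i) (delta_mx 0 j) = \row_k mc p q n i j k.
Proof.
apply/rowP => k; rewrite !mxE; under eq_bigr do under eq_bigr do rewrite -mulrA.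
by under eq_bigr do rewrite -mulr_sumr; rewrite !sum_delta_mx.
Qed.

Lemma comulm_delta p q n k : comulm p q n (delta_mx 0 k) = \matrix_(i, j) dc p q n i j k.
Proof. by apply/matrixP => i j; rewrite !mxE sum_delta_mx. Qed.

(* Both sides are bilinear in (u, w); on basis vectors this is the axiom that
   Delta is multiplicative. *)
Lemma comulm_hmul p q a b (u : 'rV[K]_(d p)) (w : 'rV[K]_(d q)) :
  comulm a b (p + q) (hmul p q (p + q) u w) =
  \sum_(p1 < p.+1) \sum_(q1 < q.+1)
     tmul a b (comulm p1 (p - p1) p u) (comulm q1 (q - q1) q w).
Proof.
rewrite (row_sum_delta u) (row_sum_delta w) bilinear_sumZ linear_sum.
under eq_bigr do rewrite linear_sumZ.
under [RHS]eq_bigr do under eq_bigr do rewrite !linear_sumZ bilinear_sumZ.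
rewrite [RHS]big_swap22; apply: eq_bigr => i _; apply: eq_bigr => j _.
under eq_bigr do rewrite -scaler_sumr; rewrite -scaler_sumr; congr (_ *: _).
apply/matrixP => s t; rewrite /= hmul_delta !mxE summxE.
under eq_bigr do rewrite mxE.
rewrite smc_sdc; apply: eq_bigr => p1 _; rewrite summxE; apply: eq_bigr => q1 _.
by rewrite !mxE; do 4!(apply: eq_bigr => ? _); rewrite !comulm_delta !mxE.
Qed.

Lemma row_tmul p1 p2 q1 q2 a b (M : 'M[K]_(d p1, d p2)) (N : 'M[K]_(d q1, d q2)) s :
  row s (tmul a b M N) =
  \sum_i1 \sum_j1 mc p1 q1 a i1 j1 s *: hmul p2 q2 b (row i1 M) (row j1 N).
Proof.
apply/rowP => t; rewrite !mxE summxE; apply: eq_bigr => i1 _.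
rewrite summxE exchange_big; apply: eq_bigr => j1 _; rewrite !mxE mulr_sum2r.
by do 2!(apply: eq_bigr => ? _); rewrite !mxE; ring.
Qed.

Lemma colr_tmul p1 p2 q1 q2 a b (M : 'M[K]_(d p1, d p2)) (N : 'M[K]_(d q1, d q2)) t :
  colr (tmul a b M N) t =
  \sum_i2 \sum_j2 mc p2 q2 b i2 j2 t *: hmul p1 q1 a (colr M i2) (colr N j2).
Proof.
apply/rowP => s; rewrite !mxE; under eq_bigr do rewrite exchange_big.
rewrite big_swap22 summxE; apply: eq_bigr => i2 _; rewrite summxE.
apply: eq_bigr => j2 _; rewrite !mxE mulr_sum2r.
by do 2!(apply: eq_bigr => ? _); rewrite !mxE; ring.
Qed.

Lemma tmul_tensv p1 p2 q1 q2 a b U1 U2 V1 V2 (W1 : {vspace 'rV[K]_(d a)})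
    (W2 : {vspace 'rV[K]_(d b)}) (M : 'M[K]_(d p1, d p2)) (N : 'M[K]_(d q1, d q2)) :
  M \in tensv U1 U2 -> N \in tensv V1 V2 ->
  (forall x y, x \in U1 -> y \in V1 -> hmul p1 q1 a x y \in W1) ->
  (forall x y, x \in U2 -> y \in V2 -> hmul p2 q2 b x y \in W2) ->
  tmul a b M N \in tensv W1 W2.
Proof.
move=> /mem_tensvP [MU1 MU2] /mem_tensvP [NV1 NV2] W1UV W2UV.
apply/mem_tensvP; split=> [t | s]; rewrite (colr_tmul, row_tmul);
  apply: rpred_sum => ? _; apply: rpred_sum => ? _; apply: rpredZ.
  exact: W1UV.
exact: W2UV.
Qed.

Lemma lvalE (phi : lfun H) n x : lval phi n x = ev (lcomp phi n) x.
Proof. by apply: eq_bigr => i _; rewrite mxE mulrC. Qed.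

Lemma lval_hmul (phi : lfun H) p q x y : is_character phi ->
  lval phi (p + q) (hmul p q (p + q) x y) = lval phi p x * lval phi q y.
Proof.
case=> _ phiM; rewrite !lvalE ev_hmul /ev mulr_suml; apply: eq_bigr => i _.
rewrite mulr_sumr; apply: eq_bigr => j _.
rewrite mxE (eq_bigr (fun k => mc p q (p + q) i j k * phi (p + q)%N k)) ?phiM.
  by rewrite !mxE; ring.
by move=> k _; rewrite mxE.
Qed.

Lemma gsubcoalg_tensv (T : gsubspace H) n x p : is_gsubcoalg T -> x \in T n ->
  (p <= n)%N -> comulm p (n - p) n x \in tensv (T p) (T (n - p)%N).
Proof. by move=> Tco xT pn; apply/in_tensorP/Tco. Qed.

Lemma gsubcoalg_tensvD (T : gsubspace H) p q x : is_gsubcoalg T -> x \in T (p + q)%N ->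
  comulm p q (p + q) x \in tensv (T p) (T q).
Proof. by move=> Tco xT; have := gsubcoalg_tensv Tco xT (leq_addr q p); rewrite addKn. Qed.

Lemma ev_colr_comulm p q n (f : 'rV[K]_(d p)) (x : 'rV[K]_(d n)) j :
  ev f (colr (comulm p q n x) j) = ev (dmul p q n f (delta_mx 0 j)) x.
Proof. by rewrite ev_dmul_cols sum_delta_mx. Qed.

Lemma ev_row_comulm p q n (g : 'rV[K]_(d q)) (x : 'rV[K]_(d n)) i :
  ev g (row i (comulm p q n x)) = ev (dmul p q n (delta_mx 0 i) g) x.
Proof. by rewrite ev_dmul_rows sum_delta_mx. Qed.

End GradedHopf.

Section CharacterIdeal.
Variables (K : fieldType) (H : gHopfData K).
Hypothesis HH : is_gcHopf H.
Variables phi psi : lfun H.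
Hypotheses (Hphi : is_character phi) (Hpsi : is_character psi).
Local Notation d := (hdim H).
Local Notation I := (Icomp phi psi).

Definition theta m : 'rV[K]_(d m) := lcomp phi m - lcomp psi m.

Lemma agree_on_theta (T : gsubspace H) :
  agree_on phi psi T <-> forall n x, x \in T n -> ev (theta n) x = 0.
Proof.
split=> [Tag n x xT | Tth n x xT]; first by rewrite linearBl /= -!lvalE Tag ?subrr.
by apply/eqP; rewrite !lvalE -subr_eq0 -linearBl; apply/eqP/Tth.
Qed.

(* The generators a (phi_m - psi_m) b of I(phi, psi); the degrees N and n are
   free, the generator being 0 unless N = p + m and n = N + r. *)
Definition Igen n N p m r (a : 'rV[K]_(d p)) (b : 'rV[K]_(d r)) : 'rV[K]_(d n) :=
  dmul N r n (dmul p m N a (theta m)) b.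
Arguments Igen : clear implicits.

Lemma Icomp_gen n N p m r a b : Igen n N p m r a b \in I n.
Proof.
case: (eqVneq n (N + r)%N) => [nE | ne]; last by rewrite /Igen dmul_offdeg ?mem0v.
case: (eqVneq N (p + m)%N) => [NE | ne]; last first.
  by rewrite /Igen [dmul p m N _ _]dmul_offdeg ?linear0l ?mem0v.
subst N; have rE : r = (n - m - p)%N by lia.
subst r; have hm : (m < n.+1)%N by lia.
have hp : (p < (n - m).+1)%N by lia.
have gen_I i j : Igen n (p + m) p m (n - m - p) (drow p i) (drow (n - m - p) j) \in I n.
  apply: (memv_sum_sup (Ordinal hm)); apply: (memv_sum_sup (Ordinal hp)).
  by apply: (memv_sum_sup i); apply: (memv_sum_sup j); apply: memv_line.
rewrite /Igen (row_sum_delta a) (row_sum_delta b) linear_sumlz.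
under eq_bigr do rewrite linearZl_LR; rewrite bilinear_sumZ.
by apply: rpred_sum => i _; apply: rpred_sum => j _; apply/rpredZ/gen_I.
Qed.
Arguments Icomp_gen : clear implicits.

Lemma Icomp_sub n (W : {vspace 'rV[K]_(d n)}) :
  (forall N p m r i j, Igen n N p m r (drow p i) (drow r j) \in W) -> (I n <= W)%VS.
Proof.
move=> IW; apply/subv_sumP => m _; apply/subv_sumP => p _.
by apply/subv_sumP => i _; apply/subv_sumP => j _; rewrite -memvE; apply: IW.
Qed.

Lemma theta_Icomp n : theta n \in I n.
Proof.
have i0 : 'I_(d 0) by rewrite (hdim0 HH); apply: ord0.
by have := Icomp_gen n n 0 n 0 (drow 0 i0) (drow 0 i0); rewrite /Igen dmul1l // dmul1r.
Qed.

Lemma Icomp0 : I 0 = 0%VS.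
Proof.
apply/eqP; rewrite -subv0; apply: Icomp_sub => N p m r i j; rewrite memv0 /Igen.
case: (eqVneq 0%N (N + r)%N) => [nE | ne]; last by rewrite dmul_offdeg.
case: (eqVneq N (p + m)%N) => [NE | ne]; last first.
  by rewrite [dmul p m N _ _]dmul_offdeg ?linear0l.
have m0 : m = 0%N by lia.
subst m; have -> : theta 0 = 0.
  by case: Hphi Hpsi => phi1 _ [psi1 _]; apply/rowP => k; rewrite !mxE phi1 psi1 subrr.
by rewrite linear0r linear0l.
Qed.

Lemma Icomp_dmulr s q n c (b : 'rV[K]_(d q)) : c \in I s -> dmul s q n c b \in I n.
Proof.
move=> cI; suff /subvP/(_ c cI) : (I s <= linfun (applyr (dmul s q n) b) @^-1: I n)%VS.
  by rewrite -memv_preim lfunE.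
apply: Icomp_sub => N p m r i j; rewrite -memv_preim lfunE /= /Igen.
case: (eqVneq s (N + r)%N) => [-> | ne]; last first.
  by rewrite [dmul N r s _ _]dmul_offdeg ?linear0l ?mem0v.
by rewrite (dmulA HH); apply: Icomp_gen.
Qed.

Lemma Icomp_dmull s q n c (b : 'rV[K]_(d q)) : c \in I s -> dmul q s n b c \in I n.
Proof.
move=> cI; suff /subvP/(_ c cI) : (I s <= linfun (dmul q s n b) @^-1: I n)%VS.
  by rewrite -memv_preim lfunE.
apply: Icomp_sub => N p m r i j; rewrite -memv_preim lfunE /= /Igen.
case: (eqVneq s (N + r)%N) => [-> | ne]; last first.
  by rewrite [dmul N r s _ _]dmul_offdeg ?linear0r ?mem0v.
case: (eqVneq N (p + m)%N) => [-> | ne]; last first.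
  by rewrite [dmul p m N _ _]dmul_offdeg ?linear0l ?linear0r ?mem0v.
by rewrite -!(dmulA HH); apply: Icomp_gen.
Qed.

Lemma Icomp_sub_ann (T : gsubspace H) n : is_gsubcoalg T -> agree_on phi psi T ->
  (I n <= ann (T n))%VS.
Proof.
move=> Tco /agree_on_theta Tth; apply: Icomp_sub => N p m r i j.
apply/mem_annP => x xT; rewrite evC /Igen.
case: (eqVneq n (N + r)%N) => [nE | ne]; last by rewrite dmul_offdeg ?linear0l.
subst n; apply: ev_dmul_annl (gsubcoalg_tensvD Tco xT) _; apply/mem_annP => u uT.
case: (eqVneq N (p + m)%N) => [NE | ne]; last by rewrite dmul_offdeg ?linear0r.
subst N; rewrite evC; apply: ev_dmul_annr (gsubcoalg_tensvD Tco uT) _.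
by apply/mem_annP => v vT; rewrite evC; apply: Tth.
Qed.

Lemma ann_Icomp_gsubcoalg : is_gsubcoalg (fun n => ann (I n)).
Proof.
move=> n x /mem_annP xI p _; apply/in_tensorP/mem_tensvP.
split=> [j | i]; apply/mem_annP => c cI.
  by rewrite ev_colr_comulm xI // Icomp_dmulr.
by rewrite ev_row_comulm xI // Icomp_dmull.
Qed.

Lemma ann_Icomp_agree : agree_on phi psi (fun n => ann (I n)).
Proof. by apply/agree_on_theta => n x /mem_annP; apply; apply: theta_Icomp. Qed.

End CharacterIdeal.

Section MaximalSubcoalgebra.
Variables (K : fieldType) (H : gHopfData K).
Hypothesis HH : is_gcHopf H.
Variables phi psi : lfun H.
Hypotheses (Hphi : is_character phi) (Hpsi : is_character psi).
Variable S : gsubspace H.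
Hypothesis HS : is_S phi psi S.
Local Notation d := (hdim H).
Local Notation I := (Icomp phi psi).

Let S_gsubcoalg : is_gsubcoalg S. Proof. by case: HS. Qed.
Let S_agree : agree_on phi psi S. Proof. by case: HS. Qed.
Let S_max T : is_gsubcoalg T -> agree_on phi psi T -> forall n, (T n <= S n)%VS.
Proof. by case: HS => _ _; apply. Qed.

Lemma S_ann_Icomp n : S n = ann (I n).
Proof.
apply/eqP; rewrite eqEsubv; apply/andP; split.
  by rewrite -[X in (X <= _)%VS]annK annS ?Icomp_sub_ann.
exact: S_max (@ann_Icomp_gsubcoalg _ _ HH phi psi) (@ann_Icomp_agree _ _ HH phi psi) n.
Qed.

Lemma mem_Icomp n a : (a \in I n) = (a \in ann (S n)).
Proof. by rewrite S_ann_Icomp annK. Qed.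

Lemma S0_full : S 0 = fullv.
Proof. by rewrite S_ann_Icomp Icomp0 ?ann0. Qed.

Definition Sprod n : {vspace 'rV[K]_(d n)} :=
  (\sum_(p < n.+1) \sum_(q < n.+1) blimg (hmul p q n) (S p) (S q))%VS.

Lemma memv_Sprod p q n x y : x \in S p -> y \in S q -> hmul p q n x y \in Sprod n.
Proof.
move=> xS yS; case: (eqVneq n (p + q)%N) => [nE | ne]; last by rewrite hmul_offdeg ?mem0v.
have hp : (p < n.+1)%N by lia.
have hq : (q < n.+1)%N by lia.
apply: (memv_sum_sup (Ordinal hp)); apply: (memv_sum_sup (Ordinal hq)).
exact: memv_blimg.
Qed.

Lemma Sprod_sub n (W : {vspace 'rV[K]_(d n)}) :
  (forall p q x y, x \in S p -> y \in S q -> hmul p q n x y \in W) -> (Sprod n <= W)%VS.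
Proof.
move=> SW; apply/subv_sumP => p _; apply/subv_sumP => q _.
by apply: blimg_sub => x y; apply: SW.
Qed.

Lemma Sprod_gsubcoalg : is_gsubcoalg Sprod.
Proof.
move=> n x xS a _; apply/in_tensorP.
suff /subvP/(_ x xS) : (Sprod n <=
    linfun (comulm a (n - a) n) @^-1: tensv (Sprod a) (Sprod (n - a)))%VS.
  by rewrite -memv_preim lfunE.
apply: Sprod_sub => p q u w uS wS; rewrite -memv_preim lfunE /=.
case: (eqVneq n (p + q)%N) => [-> | ne]; last by rewrite hmul_offdeg ?linear0 ?mem0v.
rewrite (comulm_hmul HH); apply: rpred_sum => p1 _; apply: rpred_sum => q1 _.
apply: (tmul_tensv (gsubcoalg_tensv S_gsubcoalg uS _) (gsubcoalg_tensv S_gsubcoalg wS _));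
  by [rewrite -ltnS | move=> ? ? ? ?; apply: memv_Sprod].
Qed.

Lemma Sprod_agree : agree_on phi psi Sprod.
Proof.
apply/agree_on_theta => n x xS.
suff /subvP/(_ x xS)/mem_annP : (Sprod n <= ann <[theta phi psi n]>)%VS.
  by apply; apply: memv_line.
apply: Sprod_sub => p q u w uS wS; apply/mem_annP => _ /vlineP [k ->].
case: (eqVneq n (p + q)%N) => [-> | ne]; last by rewrite hmul_offdeg ?linear0r.
by rewrite linearZl_LR linearBl /= -!lvalE !lval_hmul // !S_agree // subrr mulr0.
Qed.

Lemma hmul_memS p q x y : x \in S p -> y \in S q -> hmul p q (p + q) x y \in S (p + q)%N.
Proof. by move=> xS yS; apply/(subvP (S_max Sprod_gsubcoalg Sprod_agree _))/memv_Sprod. Qed.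

(* Delta x lies in S (x) S, where a and dualproj (S p) a agree. *)
Lemma ev_dmul_dualproj p q (a : 'rV[K]_(d p)) (b : 'rV[K]_(d q)) x : x \in S (p + q)%N ->
  ev (dmul p q (p + q) a b) x =
  ev (dmul p q (p + q) (dualproj (S p) a) (dualproj (S q) b)) x.
Proof.
move=> xS; have Sx := gsubcoalg_tensvD S_gsubcoalg xS.
set aP := dualproj (S p) a; set bP := dualproj (S q) b.
have -> : dmul p q (p + q) a b =
    dmul p q (p + q) (a - aP) b + (dmul p q (p + q) aP (b - bP) + dmul p q (p + q) aP bP).
  by rewrite linearBl linearBr /= !subrK.
rewrite linearDl /= [ev (_ + _) _]linearDl /= {}/aP {}/bP.
rewrite (ev_dmul_annl _ Sx (dualproj_ann _ _)).
by rewrite (ev_dmul_annr _ Sx (dualproj_ann _ _)) !add0r.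
Qed.

End MaximalSubcoalgebra.

Theorem corollary5p4 (K : fieldType) (H : gHopfData K)
  (HH : is_gcHopf H) (phi psi : lfun H)
  (Hphi : is_character phi) (Hpsi : is_character psi)
  (S : gsubspace H) (HS : is_S phi psi S) :
  exists F : forall n, {linear 'rV[K]_(hdim H n) -> sdual S n},
    iso_data S (Icomp phi psi) F.
Proof.
have sevE n a x : sev S n (restr (S n) a) x = ev a (projv (S n) x) by apply: restr_vsproj.
have sevS n a x : x \in S n -> sev S n (restr (S n) a) x = ev a x.
  by move=> xS; rewrite sevE projv_id.
exists (fun n => restr (S n)); split.
- by move=> n g; apply: restr_surj.
- by move=> n a; rewrite (mem_Icomp HH HS); apply: restr_eq0.
split.
- move=> p q a b x xS; rewrite sevS // (ev_dmul_dualproj HS) // ev_dmul.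
  by apply: eq_bigr => i _; apply: eq_bigr => j _; rewrite !sevE !mxE.
- by move=> x xS; rewrite sevS //; apply: eq_bigr => i _; rewrite mxE mul1r.
- move=> p q a x y xS yS; rewrite sevS ?(hmul_memS HH Hphi Hpsi HS) // ev_hmul.
  by apply: eq_bigr => i _; apply: eq_bigr => j _; rewrite !sevS // !ev_delta.
- move=> a; rewrite sevS ?(S0_full HH Hphi Hpsi HS) ?memvf //.
  by apply: eq_bigr => i _; rewrite mxE mulr1.
Qed.
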